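(* For $u\in\{0,1\}^3$ and $n\ge1$, let $f_u(X,Y,Z)=\bigoplus_{i=1}^n t_u(x_iy_iz_i)$, where Alice, Bob and Carol hold $X=(x_1,\dots,x_n)$, $Y=(y_1,\dots,y_n)$, $Z=(z_1,\dots,z_n)\in\{0,1\}^n$ respectively, $t_u(w)=1$ if $w=u$ and $0$ otherwise, and the inputs satisfy the promise that every triple $x_iy_iz_i$ has the same parity as $u$ (i.e. $x_i\oplus y_i\oplus z_i=u_1\oplus u_2\oplus u_3$ for all $i$). Then each of the eight functions $f_u$ can be computed by a deterministic classical protocol (no shared entanglement) with three bits of communication, at the end of which Alice knows the value; moreover, none of these eight functions can be computed by such a deterministic classical protocol with only two bits of communication.
   Context: In a deterministic classical communication protocol, the three parties have no shared randomness or entanglement and exchange classical bits; the cost is the total number of bits communicated, and the protocol must give the correct value for every input satisfying the promise. *)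

From mathcomp Require Import all_boot.
Set Implicit Arguments. Unset Strict Implicit. Unset Printing Implicit Defensive.

Definition input (n : nat) := 'I_n -> bool.

Inductive party := Alice | Bob | Carol.

(* Deterministic three-party protocol (blackboard model, no shared randomness,
   no entanglement).  The tree position encodes the transcript so far: at a
   [Send p msg t0 t1] node, party [p] sends the bit [msg (its own input)]
   and the protocol continues in [t0] or [t1] according to that bit.
   At a leaf [Out g], Alice outputs [g X], a function of her input and of
   the transcript (the path to the leaf). *)
Inductive proto (n : nat) : Type :=
| Out : (input n -> bool) -> proto n
| Send : party -> (input n -> bool) -> proto n -> proto n -> proto n.

Definition input_of n (p : party) (X Y Z : input n) : input n :=
  match p with Alice => X | Bob => Y | Carol => Z end.

Fixpoint run n (P : proto n) (X Y Z : input n) : bool :=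
  match P with
  | Out g => g X
  | Send p m t0 t1 =>
      if m (input_of p X Y Z) then run t1 X Y Z else run t0 X Y Z
  end.

Fixpoint cost n (P : proto n) : nat :=
  match P with
  | Out _ => 0
  | Send _ _ t0 t1 => (maxn (cost t0) (cost t1)).+1
  end.

Definition t_u (u1 u2 u3 : bool) (a b c : bool) : bool :=
  [&& a == u1, b == u2 & c == u3].

Definition f_u (u1 u2 u3 : bool) n (X Y Z : input n) : bool :=
  \big[addb/false]_(i < n) t_u u1 u2 u3 (X i) (Y i) (Z i).

Definition promise_u (u1 u2 u3 : bool) n (X Y Z : input n) : Prop :=
  forall i : 'I_n, X i (+) Y i (+) Z i = u1 (+) u2 (+) u3.

Definition computes_fu (u1 u2 u3 : bool) n (P : proto n) : Prop :=
  forall X Y Z : input n, promise_u u1 u2 u3 X Y Z ->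
    run P X Y Z = f_u u1 u2 u3 X Y Z.

From mathcomp Require Import all_boot zify.

Set Implicit Arguments.
Unset Strict Implicit.

(* Under the promise a coordinate either equals u or differs from it in exactly
   two places.  So if A, B, C count the coordinates where X, Y, Z differ from u
   and T those equal to u, then 2T + A + B + C = 2n, and f_u = T mod 2 is fixed
   by n and (A + B + C) mod 4.  Alice knows A, Carol sends C mod 4 and Bob the
   second bit of B, whose first bit is forced by parity: three bits in all.
   For the lower bound take n = 3.  Flipping every input by u reduces each f_u
   to u = 000 with Carol holding X xor Y; an exhaustive search through all
   two-bit protocols, splitting the set of still possible inputs along each
   message, shows that Alice's answer can never become a function of X. *)

(* With a = 2a' + a0 etc., parity forces b0 = a0 (+) c0, whence
   (a0 + b0 + c0)/2 = a0 || c0. *)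
Lemma odd_from_double_sum t a b c n :
  t.*2 + a + b + c = n.*2 ->
  odd t = odd n (+) odd a./2 (+) odd b./2 (+) odd c./2 (+) (odd a || odd c).
Proof.
move=> E.
have -> : n = t + a./2 + b./2 + c./2 + (odd a || odd c).
  have := odd_double_half a; have := odd_double_half b; have := odd_double_half c.
  by case: (odd a) (odd b) (odd c) => [] [] [] /=; lia.
rewrite !oddD oddb.
by case: (odd t) (odd a./2) (odd b./2) (odd c./2) (odd a || odd c) => [] [] [] [] [].
Qed.

Section ThreeBitProtocol.
Variables (u1 u2 u3 : bool) (n : nat).

Definition flips (u : bool) (X : input n) : nat := \sum_(i < n) (X i (+) u).

Lemma t_u_flips x y z : x (+) y (+) z = u1 (+) u2 (+) u3 ->
  (t_u u1 u2 u3 x y z).*2 + (x (+) u1) + (y (+) u2) + (z (+) u3) = 2.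
Proof. by case: x y z u1 u2 u3 => [] [] [] [] [] []. Qed.

Lemma f_u_odd X Y Z :
  f_u u1 u2 u3 X Y Z = odd (\sum_(i < n) t_u u1 u2 u3 (X i) (Y i) (Z i)).
Proof.
rewrite (big_morph odd oddD (erefl (odd 0))).
by apply: eq_bigr => i _; rewrite oddb.
Qed.

Lemma promise_count (X Y Z : input n) : promise_u u1 u2 u3 X Y Z ->
  (\sum_(i < n) t_u u1 u2 u3 (X i) (Y i) (Z i)).*2
    + flips u1 X + flips u2 Y + flips u3 Z = n.*2.
Proof.
move=> promXYZ; rewrite (big_morph double doubleD (erefl : 0.*2 = 0)) /flips -!big_split /=.
rewrite (eq_bigr (fun=> 2)) => [|i _]; last exact: t_u_flips.
by rewrite sum_nat_const card_ord muln2.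
Qed.

Definition node (p : party) (m : input n -> bool) (k : bool -> proto n) : proto n :=
  Send p m (k false) (k true).

Lemma run_node p m k X Y Z :
  run (node p m k) X Y Z = run (k (m (input_of p X Y Z))) X Y Z.
Proof. by rewrite /=; case: (m _). Qed.

Definition three_bit_protocol : proto n :=
  node Carol (fun Z => odd (flips u3 Z)) (fun c0 =>
  node Carol (fun Z => odd (flips u3 Z)./2) (fun c1 =>
  node Bob (fun Y => odd (flips u2 Y)./2) (fun b1 =>
  Out (fun X => odd n (+) odd (flips u1 X)./2 (+) b1 (+) c1 (+) (odd (flips u1 X) || c0))))).

Lemma three_bit_protocol_cost : cost three_bit_protocol = 3.
Proof. by []. Qed.

Lemma three_bit_protocol_correct : computes_fu u1 u2 u3 three_bit_protocol.
Proof.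
move=> X Y Z promXYZ.
by rewrite !run_node /= f_u_odd (odd_from_double_sum (promise_count promXYZ)).
Qed.

End ThreeBitProtocol.

Definition bits3 := (bool * bool * bool)%type.

Definition xor3 (a b : bits3) : bits3 :=
  let: (a1, a2, a3) := a in let: (b1, b2, b3) := b in (a1 (+) b1, a2 (+) b2, a3 (+) b3).

Definition bits3_enum : seq bits3 :=
  [:: (false, false, false); (false, false, true); (false, true, false); (false, true, true);
      (true, false, false); (true, false, true); (true, true, false); (true, true, true)].

Definition bits3_code (v : bits3) : nat :=
  let: (x, y, z) := v in (if x then 4 else 0) + (if y then 2 else 0) + (if z then 1 else 0).

Lemma nth_bits3_enum v : nth v bits3_enum (bits3_code v) = v.
Proof. by case: v => [[[] []] []]. Qed.

Definition f_zero (a b : bits3) : bool :=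
  let: (a1, a2, a3) := a in let: (b1, b2, b3) := b in
  (~~ a1 && ~~ b1) (+) (~~ a2 && ~~ b2) (+) (~~ a3 && ~~ b3).

Definition view (p : party) (a b : bits3) : bits3 :=
  match p with Alice => a | Bob => b | Carol => xor3 a b end.

(* A pool lists, for each input a of Alice, the inputs b of Bob still possible. *)
Definition pool := seq (bits3 * seq bits3).

Definition full_pool : pool := [seq (a, bits3_enum) | a <- bits3_enum].

Definition alice_knows (D : pool) : bool :=
  all (fun g => constant [seq f_zero g.1 b | b <- g.2]) D.

Lemma alice_knows_fun (D : pool) (G : bits3 -> bool) :
  (forall g, g \in D -> forall b, b \in g.2 -> f_zero g.1 b = G g.1) -> alice_knows D.
Proof.
move=> DG; apply/allP => g gD; apply: (@all_pred1_constant _ (G g.1)).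
by apply/allP => _ /mapP [b bg ->]; rewrite /= (DG g).
Qed.

Definition restrict (p : party) (h : bits3 -> bool) (s : bool) (D : pool) : pool :=
  [seq (g.1, [seq b <- g.2 | h (view p g.1 b) == s]) | g <- D].

Lemma restrict_addb p h' h c : (forall v, h' v = h v (+) c) ->
  forall s D, restrict p h' s D = restrict p h (s (+) c) D.
Proof.
move=> h'E s D; apply: eq_map => g; congr (_, _); apply: eq_filter => b.
by rewrite h'E; case: (h _) c s {h'E} => [] [] [].
Qed.

Fixpoint bool_seqs (k : nat) : seq (seq bool) :=
  if k is k'.+1 then [seq false :: t | t <- bool_seqs k'] ++ [seq true :: t | t <- bool_seqs k']
  else [:: [::]].

Lemma mem_bool_seqs k t : size t = k -> t \in bool_seqs k.
Proof.
elim: k t => [|k IHk] [|x t] //= [/IHk tk].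
by rewrite mem_cat; case: x; rewrite map_f ?orbT.
Qed.

Definition of_table (t : seq bool) (v : bits3) : bool := nth false t (bits3_code v).

Definition tables : seq (seq bool) := [seq false :: t | t <- bool_seqs 7].

Lemma of_table_map h v : of_table (map h bits3_enum) v = h v.
Proof. by rewrite /of_table (nth_map v) ?nth_bits3_enum //; case: v => [[[] []] []]. Qed.

(* Tables are normalised to vanish at (0,0,0): complementing a message
   only swaps the two subtrees. *)
Lemma tables_complete (h : bits3 -> bool) :
  exists2 t, t \in tables & forall v, of_table t v = h v (+) h (false, false, false).
Proof.
exists (map (fun v => h v (+) h (false, false, false)) bits3_enum); last exact: of_table_map.
by rewrite /= addbb; apply: map_f; apply: mem_bool_seqs.
Qed.

(* Alice's last bit informs nobody. *)
Definition may_speak (k : nat) (p : party) : bool := if p is Alice then 0 < k else true.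

Fixpoint solvable (k : nat) (D : pool) : bool :=
  alice_knows D ||
  if k is k'.+1 then
    has (fun p => may_speak k' p &&
           has (fun t => solvable k' (restrict p (of_table t) false D)
                      && solvable k' (restrict p (of_table t) true D)) tables)
        [:: Alice; Bob; Carol]
  else false.

Lemma silent_speaker k p : ~~ may_speak k p -> p = Alice /\ k = 0.
Proof. by case: p k => [] [|k]. Qed.

Lemma alice_knows_solvable k D : alice_knows D -> solvable k D.
Proof. by case: k => [|k] knows; apply/orP; left. Qed.

Lemma has_party (a : pred party) p : a p -> has a [:: Alice; Bob; Carol].
Proof. by case: p => ap; rewrite /= ap ?orbT. Qed.

Lemma solvableS k D p : may_speak k p ->
  has (fun t => solvable k (restrict p (of_table t) false D)
             && solvable k (restrict p (of_table t) true D)) tables ->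
  solvable k.+1 D.
Proof.
move=> speaks p_split; apply/orP; right.
by apply: (has_party (p := p)); apply/andP.
Qed.

Lemma full_pool_not_solvable2 : solvable 2 full_pool = false.
Proof. vm_cast_no_check (erefl false). Qed.

Lemma run_cost0 n (P : proto n) :
  cost P = 0 -> forall X Y Z Y' Z', run P X Y Z = run P X Y' Z'.
Proof. by case: P. Qed.

Section Embedding.
Variables u1 u2 u3 : bool.

(* Alice, Bob and Carol get a (+) u1, b (+) u2 and (a xor b) (+) u3, on which
   f_u is f_zero a b. *)
Definition embed (u : bool) (v : bits3) : input 3 :=
  fun i => let: (v1, v2, v3) := v in nth false [:: v1; v2; v3] i (+) u.

Definition party_bit (p : party) : bool :=
  match p with Alice => u1 | Bob => u2 | Carol => u3 end.

Lemma input_of_embed p a b :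
  input_of p (embed u1 a) (embed u2 b) (embed u3 (xor3 a b))
  = embed (party_bit p) (view p a b).
Proof. by case: p. Qed.

Lemma promise_embed a b :
  promise_u u1 u2 u3 (embed u1 a) (embed u2 b) (embed u3 (xor3 a b)).
Proof.
have xor_embed x y : x (+) u1 (+) (y (+) u2) (+) (x (+) y (+) u3) = u1 (+) u2 (+) u3.
  by case: x y u1 u2 u3 => [] [] [] [] [].
by case: a b => [[a1 a2] a3] [[b1 b2] b3] [[|[|[|i]]] //= _]; apply: xor_embed.
Qed.

Lemma f_u_embed a b :
  f_u u1 u2 u3 (embed u1 a) (embed u2 b) (embed u3 (xor3 a b)) = f_zero a b.
Proof.
have t_u_embed x y : t_u u1 u2 u3 (x (+) u1) (y (+) u2) (x (+) y (+) u3) = ~~ x && ~~ y.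
  by case: x y u1 u2 u3 => [] [] [] [] [].
case: a b => [[a1 a2] a3] [[b1 b2] b3].
by rewrite /f_u !big_ord_recl big_ord0 /= !t_u_embed addbF addbA.
Qed.

Definition correct_on (P : proto 3) (D : pool) : Prop :=
  forall g, g \in D -> forall b, b \in g.2 ->
    run P (embed u1 g.1) (embed u2 b) (embed u3 (xor3 g.1 b)) = f_zero g.1 b.

Lemma correct_on_alice_knows (P : proto 3) D :
  (forall X Y Z Y' Z', run P X Y Z = run P X Y' Z') -> correct_on P D -> alice_knows D.
Proof.
move=> P_alice PD.
apply: (alice_knows_fun (G := fun a => run P (embed u1 a) (embed u2 a) (embed u3 a))).
by move=> g gD b bg; rewrite -(PD g gD b bg); apply: P_alice.
Qed.

Lemma alice_last_bit_useless m (t0 t1 : proto 3) D : cost t0 = 0 -> cost t1 = 0 ->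
  correct_on (Send Alice m t0 t1) D -> alice_knows D.
Proof.
move=> cost0 cost1; apply: correct_on_alice_knows => X Y Z Y' Z' /=.
by rewrite (run_cost0 cost0 X Y Z Y' Z') (run_cost0 cost1 X Y Z Y' Z').
Qed.

Lemma correct_on_restrict s p m (t0 t1 : proto 3) D : correct_on (Send p m t0 t1) D ->
  correct_on (if s then t1 else t0) (restrict p (fun v => m (embed (party_bit p) v)) s D).
Proof.
move=> PD _ /mapP [g gD ->] b /=; rewrite mem_filter => /andP [/eqP ms bg].
by rewrite -(PD g gD b bg) /= input_of_embed ms; case: s {ms}.
Qed.

Lemma solvable_split p m (t0 t1 : proto 3) k D :
  (forall D, correct_on t0 D -> solvable k D) ->
  (forall D, correct_on t1 D -> solvable k D) ->
  correct_on (Send p m t0 t1) D ->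
  has (fun t => solvable k (restrict p (of_table t) false D)
             && solvable k (restrict p (of_table t) true D)) tables.
Proof.
move=> sol0 sol1 PD.
have [t t_tab tE] := tables_complete (fun v => m (embed (party_bit p) v)).
apply/hasP; exists t => //; rewrite !(restrict_addb p tE).
have PD0 := correct_on_restrict (s := false) PD.
have PD1 := correct_on_restrict (s := true) PD.
by case: (m _); rewrite /= (sol0 _ PD0) (sol1 _ PD1).
Qed.

Lemma solvable_sound (P : proto 3) k D : cost P <= k -> correct_on P D -> solvable k D.
Proof.
elim: P k D => [g|p m t0 IH0 t1 IH1] k D costP PD.
  by apply/alice_knows_solvable/(correct_on_alice_knows _ PD).
case: k costP => [|k] //; rewrite ltnS geq_max => /andP [cost0 cost1].
have [speaks | silent] := boolP (may_speak k p).
  exact: solvableS speaks (solvable_split (fun D => IH0 k D cost0) (fun D => IH1 k D cost1) PD).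
have [pA k0] := silent_speaker silent.
move: cost0 cost1 PD; rewrite pA k0 !leqn0 => /eqP cost0 /eqP cost1 PD.
exact/alice_knows_solvable/(alice_last_bit_useless cost0 cost1 PD).
Qed.

Lemma no_two_bit_protocol :
  ~ exists P : proto 3, cost P <= 2 /\ computes_fu u1 u2 u3 P.
Proof.
case=> P [costP P_fu].
have PD : correct_on P full_pool.
  move=> _ /mapP [a _ ->] b _ /=.
  by rewrite -f_u_embed; apply: P_fu; apply: promise_embed.
by move: (solvable_sound costP PD); rewrite full_pool_not_solvable2.
Qed.

End Embedding.

Theorem theorem3 (u1 u2 u3 : bool) :
  (forall n : nat, 0 < n ->
     exists P : proto n, cost P <= 3 /\ computes_fu u1 u2 u3 P)
  /\
  (exists n : nat, 0 < n /\
     ~ (exists P : proto n, cost P <= 2 /\ computes_fu u1 u2 u3 P)).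
Proof.
split=> [n _ | ].
  exists (three_bit_protocol u1 u2 u3 n).
  by rewrite three_bit_protocol_cost; split; last exact: three_bit_protocol_correct.
by exists 3; split; last exact: no_two_bit_protocol.
Qed.
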